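(* Let $n,m,r\in\mathbb{N}$, $\overline{f}\in C[0,1]$, let $\overline{B}_{n,m}$ be the composite Bernstein operator and $(\overline{B}_{n,m})^r$ its $r$-th iterate, and let $S_{\Delta_m}\overline{f}$ be the piecewise linear interpolant of $\overline{f}$ at the nodes $0,\frac1m,\dots,\frac{m-1}{m},1$. Then for every $k\in\{1,\dots,m\}$ and $x\in\left[\frac{k-1}{m},\frac{k}{m}\right]$, $$ \left|(\overline{B}_{n,m})^r(\overline{f};x)-S_{\Delta_m}(\overline{f};x)\right|\le\frac94\,\omega_2\left(\overline{f};\sqrt{\left(x-\frac{k-1}{m}\right)\left(\frac{k}{m}-x\right)\left(1-\frac1n\right)^r}\right), $$ and consequently $$ \left\|(\overline{B}_{n,m})^r(\overline{f})-S_{\Delta_m}(\overline{f})\right\|_\infty\le\frac94\,\omega_2\left(\overline{f};\frac{1}{2m}\sqrt{\left(1-\frac1n\right)^r}\right); $$ in particular $(\overline{B}_{n,m})^r(\overline{f})\to S_{\Delta_m}(\overline{f})$ uniformly on $[0,1]$ as $r\to\infty$ for fixed $n,m$.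
   Context: For $a<b$, $f:[a,b]\to\mathbb{R}$ and $n\in\mathbb{N}$, $B_n^{[a,b]}(f;x)=\frac{1}{(b-a)^n}\sum_{i=0}^n\binom{n}{i}(x-a)^i(b-x)^{n-i}f\left(a+i\frac{b-a}{n}\right)$. For $1\le k\le m$ put $B_{n,k}(f;x):=B_n^{[\frac{k-1}{m},\frac{k}{m}]}(f;x)$ and $\overline{B}_{n,m}(f;x):=B_{n,k}(f;x)$ for $x\in\left[\frac{k-1}{m},\frac{k}{m}\right]$; this maps $C[0,1]$ into $C[0,1]$. $\omega_2(f,\delta)=\sup\{|f(x-h)-2f(x)+f(x+h)|: x\pm h\in[0,1],\ |h|\le\delta\}$. $\|\cdot\|_\infty$ is the sup norm on $[0,1]$. *)

From Stdlib Require Import Reals Lra ZArith.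
From Coquelicot Require Import Coquelicot.
Open Scope R_scope.

Definition bernstein_ab (a b : R) (n : nat) (f : R -> R) (x : R) : R :=
  / (b - a) ^ n *
  sum_f_R0 (fun i => Binomial.C n i * (x - a) ^ i * (b - x) ^ (n - i)
                     * f (a + INR i * (b - a) / INR n)) n.

Definition bernstein_k (n m k : nat) (f : R -> R) (x : R) : R :=
  bernstein_ab (INR (k - 1) / INR m) (INR k / INR m) n f x.

(* At interior
   nodes x = j/m both adjacent choices give the same value f(j/m), so the
   choice is immaterial. *)
Definition piece_index (m : nat) (x : R) : nat :=
  Nat.min m (Nat.max 1 (Z.to_nat (up (INR m * x)))).

Definition comp_bernstein (n m : nat) (f : R -> R) (x : R) : R :=
  bernstein_k n m (piece_index m x) f x.

Definition comp_bernstein_iter (n m r : nat) (f : R -> R) : R -> R :=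
  Nat.iter r (comp_bernstein n m) f.

Definition lin_interp (m : nat) (f : R -> R) (x : R) : R :=
  let k := piece_index m x in
  f (INR (k - 1) / INR m)
  + (INR m * x - INR (k - 1)) * (f (INR k / INR m) - f (INR (k - 1) / INR m)).

Definition omega2 (f : R -> R) (delta : R) : R :=
  real (Lub_Rbar (fun v => exists x h,
     0 <= x - h <= 1 /\ 0 <= x + h <= 1 /\ Rabs h <= delta /\
     v = Rabs (f (x - h) - 2 * f x + f (x + h)))).

Definition supnorm01 (g : R -> R) : R :=
  real (Lub_Rbar (fun v => exists x, 0 <= x <= 1 /\ v = Rabs (g x))).

Definition cont01 (f : R -> R) : Prop :=
  forall x, 0 <= x <= 1 ->
    filterlim f (within (fun y => 0 <= y <= 1) (locally x)) (locally (f x)).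

From Stdlib Require Import Reals Lra Lia ZArith.
From Coquelicot Require Import Coquelicot.
Open Scope R_scope.

(* On a piece [a,b] the iterated composite operator is the iterate of B_n^{[a,b]}, a positive
   operator that fixes affine functions and has bump a b t = (t-a)(b-t) as eigenfunction with
   eigenvalue 1 - 1/n.  A maximum-principle argument shows |f - S f| <= W + (W/h^2) bump a b
   on [a,b] whenever W > omega2(f,h); iterating r times and choosing
   h^2 = bump a b x * (1 - 1/n)^r yields the pointwise estimate with constant 2 <= 9/4,
   and the uniform estimate and convergence follow since bump a b <= (1/(2m))^2. *)

Definition bernstein_basis (n : nat) (p q : R) (i : nat) : R :=
  Binomial.C n i * p ^ i * q ^ (n - i).

Lemma C_nonneg n i : 0 <= Binomial.C n i.
Proof.
  unfold Binomial.C.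
  pose proof (INR_fact_lt_0 n). pose proof (INR_fact_lt_0 i). pose proof (INR_fact_lt_0 (n - i)).
  apply Rlt_le, Rdiv_lt_0_compat; [|apply Rmult_lt_0_compat]; assumption.
Qed.

Lemma C_absorption n i : (i <= n)%nat ->
  INR (S i) * Binomial.C (S n) (S i) = INR (S n) * Binomial.C n i.
Proof.
  intros Hi. unfold Binomial.C.
  replace (S n - S i)%nat with (n - i)%nat by lia.
  rewrite !fact_simpl, !mult_INR.
  pose proof (INR_fact_neq_0 i). pose proof (INR_fact_neq_0 (n - i)).
  pose proof (INR_fact_neq_0 n).
  assert (INR (S i) <> 0) by (apply not_0_INR; lia).
  field; auto.
Qed.

Lemma sum_index_C_shift n (h : nat -> R) :
  sum_f_R0 (fun i => INR i * Binomial.C (S n) i * h i) (S n)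
  = INR (S n) * sum_f_R0 (fun j => Binomial.C n j * h (S j)) n.
Proof.
  rewrite decomp_sum by lia. simpl pred.
  replace (INR 0 * Binomial.C (S n) 0 * h 0%nat) with 0 by (simpl; ring).
  rewrite Rplus_0_l, scal_sum. apply sum_eq. intros i Hi.
  rewrite (C_absorption n i Hi). ring.
Qed.

Lemma bernstein_basis_sum n p q : sum_f_R0 (bernstein_basis n p q) n = (p + q) ^ n.
Proof. rewrite binomial. reflexivity. Qed.

Lemma bernstein_basis_mean n p q :
  sum_f_R0 (fun i => INR i * bernstein_basis n p q i) n = INR n * p * (p + q) ^ (n - 1).
Proof.
  destruct n as [|n]; [simpl; unfold bernstein_basis; simpl; ring|].
  transitivity (sum_f_R0 (fun i => INR i * Binomial.C (S n) i * (p ^ i * q ^ (S n - i))) (S n)).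
  { apply sum_eq; intros; unfold bernstein_basis; ring. }
  rewrite sum_index_C_shift. replace (S n - 1)%nat with n by lia.
  rewrite <- bernstein_basis_sum, Rmult_assoc, (scal_sum (bernstein_basis n p q)). f_equal.
  apply sum_eq; intros i _. unfold bernstein_basis. simpl. ring.
Qed.

Lemma bernstein_basis_mean_rev n p q :
  sum_f_R0 (fun i => INR (n - i) * bernstein_basis n p q i) n = INR n * q * (p + q) ^ (n - 1).
Proof.
  transitivity (sum_f_R0 (fun i => bernstein_basis n p q i * INR n
                                   + (INR i * bernstein_basis n p q i) * (-1)) n).
  { apply sum_eq; intros i Hi. rewrite minus_INR by lia. ring. }
  rewrite plus_sum, <- !scal_sum, bernstein_basis_sum, bernstein_basis_mean.
  destruct n as [|n]; [simpl; ring|].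
  replace (S n - 1)%nat with n by lia. simpl. ring.
Qed.

Lemma bernstein_basis_second_moment n p q :
  sum_f_R0 (fun i => INR i * INR (n - i) * bernstein_basis n p q i) n
  = INR n * INR (n - 1) * p * q * (p + q) ^ (n - 2).
Proof.
  destruct n as [|n]; [simpl; unfold bernstein_basis; simpl; ring|].
  transitivity (sum_f_R0 (fun i => INR i * Binomial.C (S n) i
                                   * (INR (S n - i) * p ^ i * q ^ (S n - i))) (S n)).
  { apply sum_eq; intros; unfold bernstein_basis; ring. }
  rewrite sum_index_C_shift.
  transitivity (INR (S n) * (p * sum_f_R0 (fun i => INR (n - i) * bernstein_basis n p q i) n)).
  { f_equal. rewrite scal_sum. apply sum_eq; intros i _. unfold bernstein_basis. simpl. ring. }
  rewrite bernstein_basis_mean_rev.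
  replace (S n - 1)%nat with n by lia. replace (S n - 2)%nat with (n - 1)%nat by lia. ring.
Qed.

Definition bump (a b t : R) : R := (t - a) * (b - t).

Section BernsteinInterval.

Variables (a b : R) (n : nat).
Hypothesis Hab : a < b.
Hypothesis Hn : (1 <= n)%nat.

Definition bernstein_node (i : nat) : R := a + INR i * (b - a) / INR n.

Lemma bernstein_ab_basis g x :
  bernstein_ab a b n g x
  = / (b - a) ^ n * sum_f_R0 (fun i => bernstein_basis n (x - a) (b - x) i * g (bernstein_node i)) n.
Proof. reflexivity. Qed.

Lemma bernstein_node_in i : (i <= n)%nat -> a <= bernstein_node i <= b.
Proof.
  intros Hi. unfold bernstein_node. pose proof (lt_0_INR n Hn).
  assert (INR i <= INR n) by (apply le_INR; assumption).
  pose proof (pos_INR i).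
  split.
  - assert (0 <= INR i * (b - a) / INR n); [|lra].
    apply Rdiv_le_0_compat; [apply Rmult_le_pos|]; lra.
  - assert (INR i * (b - a) / INR n <= b - a); [|lra].
    apply Rle_div_l; [lra|]. nra.
Qed.

Lemma bernstein_ab_ext g1 g2 x : (forall t, a <= t <= b -> g1 t = g2 t) ->
  bernstein_ab a b n g1 x = bernstein_ab a b n g2 x.
Proof.
  intros H. rewrite !bernstein_ab_basis. f_equal. apply sum_eq. intros i Hi.
  rewrite H; [reflexivity|]. apply bernstein_node_in; assumption.
Qed.

Lemma bernstein_ab_lin al be g1 g2 x :
  bernstein_ab a b n (fun t => al * g1 t + be * g2 t) x
  = al * bernstein_ab a b n g1 x + be * bernstein_ab a b n g2 x.
Proof.
  rewrite !bernstein_ab_basis.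
  set (w := bernstein_basis n (x - a) (b - x)).
  transitivity (/ (b - a) ^ n * sum_f_R0 (fun i => w i * g1 (bernstein_node i) * al
                                                   + w i * g2 (bernstein_node i) * be) n).
  { f_equal. apply sum_eq; intros; ring. }
  rewrite plus_sum, <- !scal_sum. ring.
Qed.

Lemma bernstein_ab_monotone g1 g2 x : a <= x <= b ->
  (forall t, a <= t <= b -> g1 t <= g2 t) ->
  bernstein_ab a b n g1 x <= bernstein_ab a b n g2 x.
Proof.
  intros Hx H. rewrite !bernstein_ab_basis. apply Rmult_le_compat_l.
  - left. apply Rinv_0_lt_compat, pow_lt. lra.
  - apply sum_Rle. intros i Hi. apply Rmult_le_compat_l.
    + unfold bernstein_basis. apply Rmult_le_pos; [apply Rmult_le_pos|];
        [apply C_nonneg | apply pow_le; lra | apply pow_le; lra].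
    + apply H, bernstein_node_in; assumption.
Qed.

Lemma bernstein_ab_const x : bernstein_ab a b n (fun _ => 1) x = 1.
Proof.
  rewrite bernstein_ab_basis.
  transitivity (/ (b - a) ^ n * sum_f_R0 (bernstein_basis n (x - a) (b - x)) n).
  { f_equal. apply sum_eq; intros; ring. }
  rewrite bernstein_basis_sum. replace (x - a + (b - x)) with (b - a) by ring.
  field. apply pow_nonzero. lra.
Qed.

Lemma bernstein_ab_id x : bernstein_ab a b n (fun t => t) x = x.
Proof.
  rewrite bernstein_ab_basis. unfold bernstein_node. pose proof (lt_0_INR n Hn).
  transitivity (/ (b - a) ^ n * (a * sum_f_R0 (bernstein_basis n (x - a) (b - x)) n
       + (b - a) / INR n * sum_f_R0 (fun i => INR i * bernstein_basis n (x - a) (b - x) i) n)).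
  { f_equal. rewrite !scal_sum, <- plus_sum. apply sum_eq; intros; field. lra. }
  rewrite bernstein_basis_sum, bernstein_basis_mean. replace (x - a + (b - x)) with (b - a) by ring.
  destruct n as [|n']; [lia|]. replace (S n' - 1)%nat with n' by lia.
  change ((b - a) ^ S n') with ((b - a) * (b - a) ^ n').
  field. split; [lra|split; [apply pow_nonzero|]; lra].
Qed.

Lemma bernstein_ab_bump x :
  bernstein_ab a b n (bump a b) x = (1 - 1 / INR n) * bump a b x.
Proof.
  rewrite bernstein_ab_basis. unfold bernstein_node, bump. pose proof (lt_0_INR n Hn).
  transitivity (/ (b - a) ^ n * ((b - a) ^ 2 / INR n ^ 2 *
      sum_f_R0 (fun i => INR i * INR (n - i) * bernstein_basis n (x - a) (b - x) i) n)).
  { f_equal. rewrite scal_sum. apply sum_eq; intros i Hi. rewrite minus_INR by lia. field. lra. }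
  rewrite bernstein_basis_second_moment. replace (x - a + (b - x)) with (b - a) by ring.
  destruct (Nat.eq_dec n 1) as [->|E].
  - simpl. field. lra.
  - replace n with (2 + (n - 2))%nat at 1 by lia. rewrite pow_add, minus_INR by lia. simpl INR.
    field. split; [lra|]. split; [apply pow_nonzero; lra|lra].
Qed.

Lemma bernstein_ab_left g : bernstein_ab a b n g a = g a.
Proof.
  rewrite bernstein_ab_basis, decomp_sum by lia.
  rewrite sum_eq_R0. 2: { intros i _. unfold bernstein_basis. simpl. ring. }
  unfold bernstein_basis, bernstein_node, Binomial.C. rewrite !Nat.sub_0_r. simpl.
  replace (a + 0 * (b - a) / INR n) with a by (field; pose proof (lt_0_INR n Hn); lra).
  field; repeat split; try apply pow_nonzero; try apply INR_fact_neq_0; lra.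
Qed.

Lemma bernstein_ab_right g : bernstein_ab a b n g b = g b.
Proof.
  rewrite bernstein_ab_basis. pose proof (lt_0_INR n Hn). rewrite sum_N_predN by lia.
  rewrite sum_eq_R0.
  2: { intros i Hi. unfold bernstein_basis. replace (n - i)%nat with (S (n - i - 1)) by lia.
       simpl. ring. }
  unfold bernstein_basis, bernstein_node, Binomial.C. rewrite !Nat.sub_diag.
  replace (a + INR n * (b - a) / INR n) with b by (field; lra).
  simpl. field; repeat split; try apply pow_nonzero; try apply INR_fact_neq_0; lra.
Qed.

End BernsteinInterval.

Section BernsteinIterates.

Variables (a b : R) (n : nat).
Hypothesis Hab : a < b.
Hypothesis Hn : (1 <= n)%nat.

Definition bernstein_iter (r : nat) (g : R -> R) : R -> R := Nat.iter r (bernstein_ab a b n) g.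

Lemma bernstein_iter_S r g x :
  bernstein_iter (S r) g x = bernstein_ab a b n (bernstein_iter r g) x.
Proof. reflexivity. Qed.

Lemma bernstein_iter_lin r al be g1 g2 x : a <= x <= b ->
  bernstein_iter r (fun t => al * g1 t + be * g2 t) x
  = al * bernstein_iter r g1 x + be * bernstein_iter r g2 x.
Proof.
  revert x. induction r as [|r IH]; intros x Hx; [reflexivity|].
  rewrite !bernstein_iter_S, <- bernstein_ab_lin. apply bernstein_ab_ext; assumption.
Qed.

Lemma bernstein_iter_monotone r g1 g2 : (forall t, a <= t <= b -> g1 t <= g2 t) ->
  forall x, a <= x <= b -> bernstein_iter r g1 x <= bernstein_iter r g2 x.
Proof.
  intros H. induction r as [|r IH]; intros x Hx; simpl; auto.
  apply bernstein_ab_monotone; assumption.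
Qed.

Lemma bernstein_iter_quadratic r c0 c1 c2 x : a <= x <= b ->
  bernstein_iter r (fun t => c0 + c1 * t + c2 * bump a b t) x
  = c0 + c1 * x + c2 * ((1 - 1 / INR n) ^ r * bump a b x).
Proof.
  revert x. induction r as [|r IH]; intros x Hx; [simpl; ring|].
  rewrite bernstein_iter_S.
  rewrite (bernstein_ab_ext a b n Hab Hn _
             (fun t => 1 * (c0 * 1 + c1 * t) + (c2 * (1 - 1 / INR n) ^ r) * bump a b t))
    by (intros t Ht; rewrite IH by assumption; ring).
  rewrite (bernstein_ab_lin a b n 1 _ (fun t => c0 * 1 + c1 * t)),
          (bernstein_ab_lin a b n c0 c1 (fun _ => 1) (fun t => t)).
  rewrite bernstein_ab_const, bernstein_ab_id, bernstein_ab_bump by assumption.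
  simpl. ring.
Qed.

Lemma bernstein_iter_affine_error r g al be c0 c2 x : a <= x <= b ->
  (forall t, a <= t <= b -> Rabs (g t - (al + be * t)) <= c0 + c2 * bump a b t) ->
  Rabs (bernstein_iter r g x - (al + be * x)) <= c0 + c2 * ((1 - 1 / INR n) ^ r * bump a b x).
Proof.
  intros Hx H.
  assert (Hline : forall s, bernstein_iter r (fun t => s * g t + (- s) * (al + be * t + 0 * bump a b t)) x
                            = s * (bernstein_iter r g x - (al + be * x))).
  { intros s. rewrite bernstein_iter_lin, bernstein_iter_quadratic by assumption. ring. }
  assert (Hmaj : c0 + c2 * ((1 - 1 / INR n) ^ r * bump a b x)
                 = bernstein_iter r (fun t => c0 + 0 * t + c2 * bump a b t) x).
  { rewrite bernstein_iter_quadratic by assumption. ring. }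
  apply Rabs_le. rewrite Hmaj. split.
  - enough (- (bernstein_iter r g x - (al + be * x))
            <= bernstein_iter r (fun t => c0 + 0 * t + c2 * bump a b t) x) by lra.
    replace (- _) with ((-1) * (bernstein_iter r g x - (al + be * x))) by ring.
    rewrite <- Hline. apply bernstein_iter_monotone; [|assumption].
    intros t Ht. specialize (H t Ht). apply Rabs_le_between in H. lra.
  - replace (bernstein_iter r g x - _) with (1 * (bernstein_iter r g x - (al + be * x))) by ring.
    rewrite <- Hline. apply bernstein_iter_monotone; [|assumption].
    intros t Ht. specialize (H t Ht). apply Rabs_le_between in H. lra.
Qed.

End BernsteinIterates.

Lemma bump_second_difference a b u s :
  bump a b (u - s) - 2 * bump a b u + bump a b (u + s) = - 2 * s ^ 2.
Proof. unfold bump. ring. Qed.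

(* At a maximum point M of E - (W + (W/h^2) bump a b), the hypothesis at M with step h, or
   with the step reaching the nearer endpoint, forces that maximum to be <= 0. *)
Lemma second_difference_majorant a b h W E : a < b -> 0 < h -> 0 < W ->
  (forall c, a <= c <= b -> continuity_pt E c) -> E a = 0 -> E b = 0 ->
  (forall u s, 0 <= s <= h -> a <= u - s -> u + s <= b ->
     - W <= E (u - s) - 2 * E u + E (u + s)) ->
  forall t, a <= t <= b -> E t <= W + W / h ^ 2 * bump a b t.
Proof.
  intros Hab Hh HW HE Ea Eb Hdiff.
  set (k := W / h ^ 2).
  assert (Hk : 0 < k) by (apply Rdiv_lt_0_compat; [lra | apply pow_lt; lra]).
  set (G := fun t => E t - (W + k * bump a b t)).
  assert (HG : forall c, a <= c <= b -> continuity_pt G c).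
  { intros c Hc. unfold G, bump. apply continuity_pt_minus; [auto|reg]. }
  destruct (continuity_ab_maj G a b (Rlt_le _ _ Hab) HG) as [M [HM HMab]].
  assert (Ga : G a = - W) by (unfold G, bump; rewrite Ea; ring).
  assert (Gb : G b = - W) by (unfold G, bump; rewrite Eb; ring).
  assert (Hstep : forall s, 0 <= s <= h -> a <= M - s -> M + s <= b ->
            - W <= G (M - s) - 2 * G M + G (M + s) - 2 * k * s ^ 2).
  { intros s Hs H1 H2. pose proof (Hdiff M s Hs H1 H2).
    pose proof (bump_second_difference a b M s). unfold G. nra. }
  assert (Hinterior : h < M - a -> h < b - M -> False).
  { intros H1 H2. pose proof (Hstep h ltac:(lra) ltac:(lra) ltac:(lra)).
    pose proof (HM (M - h) ltac:(lra)). pose proof (HM (M + h) ltac:(lra)).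
    assert (k * h ^ 2 = W) by (unfold k; field; lra). lra. }
  assert (HGM : G M <= 0).
  { destruct (Rle_or_lt (M - a) (b - M)) as [C|C].
    - destruct (Rle_or_lt (M - a) h) as [C'|C']; [|exfalso; apply Hinterior; lra].
      pose proof (Hstep (M - a) ltac:(lra) ltac:(lra) ltac:(lra)) as S.
      replace (M - (M - a)) with a in S by ring. pose proof (HM (M + (M - a)) ltac:(lra)).
      pose proof (pow2_ge_0 (M - a)). nra.
    - destruct (Rle_or_lt (b - M) h) as [C'|C']; [|exfalso; apply Hinterior; lra].
      pose proof (Hstep (b - M) ltac:(lra) ltac:(lra) ltac:(lra)) as S.
      replace (M + (b - M)) with b in S by ring. pose proof (HM (M - (b - M)) ltac:(lra)).
      pose proof (pow2_ge_0 (b - M)). nra. }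
  intros t Ht. pose proof (HM t Ht). unfold G in *. fold k. lra.
Qed.

Lemma Lub_Rbar_le (E : R -> Prop) c : (exists v, E v) -> (forall v, E v -> v <= c) ->
  real (Lub_Rbar E) <= c.
Proof.
  intros [v Hv] H. destruct (Lub_Rbar_correct E) as [Hub Hlub].
  assert (Hc : Rbar_le (Lub_Rbar E) (Finite c)) by (apply Hlub; intros x Hx; apply H, Hx).
  pose proof (Hub v Hv).
  destruct (Lub_Rbar E); simpl in *; auto; contradiction.
Qed.

Lemma Lub_Rbar_ge (E : R -> Prop) c v : (forall w, E w -> w <= c) -> E v ->
  v <= real (Lub_Rbar E).
Proof.
  intros H Hv. destruct (Lub_Rbar_correct E) as [Hub Hlub].
  assert (Hc : Rbar_le (Lub_Rbar E) (Finite c)) by (apply Hlub; intros x Hx; apply H, Hx).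
  pose proof (Hub v Hv).
  destruct (Lub_Rbar E); simpl in *; auto; contradiction.
Qed.

(* [f (clamp01 t)] is continuous on all of R when [f] is continuous on [0,1], which is what the
   Stdlib extreme value and Heine theorems ask for. *)
Definition clamp01 (x : R) : R := Rmax 0 (Rmin 1 x).

Lemma clamp01_in x : 0 <= clamp01 x <= 1.
Proof. unfold clamp01, Rmax, Rmin; repeat destruct Rle_dec; lra. Qed.

Lemma clamp01_id x : 0 <= x <= 1 -> clamp01 x = x.
Proof. intros Hx. unfold clamp01, Rmax, Rmin; repeat destruct Rle_dec; lra. Qed.

Lemma clamp01_lipschitz x y : Rabs (clamp01 y - clamp01 x) <= Rabs (y - x).
Proof.
  unfold clamp01, Rmax, Rmin; repeat destruct Rle_dec; unfold Rabs; repeat destruct Rcase_abs; lra.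
Qed.

Section ModulusOfSmoothness.

Variable f : R -> R.
Hypothesis Hf : cont01 f.

Lemma cont01_continuity_pt_clamp x : continuity_pt (fun t => f (clamp01 t)) x.
Proof.
  intros eps He. pose proof (Hf _ (clamp01_in x)) as H.
  rewrite filterlim_locally in H. destruct (H (mkposreal eps He)) as [d Hd].
  exists d. split; [apply cond_pos|]. intros y [_ Hy]. simpl in *. unfold R_dist in *.
  apply (Hd (clamp01 y)); [|apply clamp01_in].
  pose proof (clamp01_lipschitz x y). apply (Rle_lt_trans _ _ _ H0 Hy).
Qed.

Lemma cont01_bounded : exists c, forall x, 0 <= x <= 1 -> Rabs (f x) <= c.
Proof.
  destruct (continuity_ab_maj (fun x => Rabs (f (clamp01 x))) 0 1 ltac:(lra)) as [M [HM _]].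
  { intros c _. apply (continuity_pt_comp (fun t => f (clamp01 t)) Rabs).
    - apply cont01_continuity_pt_clamp.
    - apply Rcontinuity_abs. }
  exists (Rabs (f (clamp01 M))). intros x Hx. rewrite <- (clamp01_id x) by assumption.
  apply HM, Hx.
Qed.

Lemma cont01_uniform eps : 0 < eps -> exists d, 0 < d /\ forall x y, 0 <= x <= 1 -> 0 <= y <= 1 ->
  Rabs (x - y) < d -> Rabs (f x - f y) < eps.
Proof.
  intros He.
  destruct (Heine (fun t => f (clamp01 t)) (fun c => 0 <= c <= 1) (compact_P3 0 1)
              (fun x _ => cont01_continuity_pt_clamp x) (mkposreal eps He)) as [d Hd].
  exists d. split; [apply cond_pos|]. intros x y Hx Hy Hxy.
  rewrite <- (clamp01_id x), <- (clamp01_id y) by assumption. apply Hd; assumption.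
Qed.

Definition second_differences (delta : R) (v : R) : Prop :=
  exists x h, 0 <= x - h <= 1 /\ 0 <= x + h <= 1 /\ Rabs h <= delta /\
    v = Rabs (f (x - h) - 2 * f x + f (x + h)).

Lemma second_differences_bounded : exists c, forall delta v, second_differences delta v -> v <= c.
Proof.
  destruct cont01_bounded as [c Hc]. exists (4 * c).
  intros delta v [x [h [H1 [H2 [_ ->]]]]].
  pose proof (proj1 (Rabs_le_between _ _) (Hc _ H1)).
  pose proof (proj1 (Rabs_le_between _ _) (Hc _ H2)).
  pose proof (proj1 (Rabs_le_between _ _) (Hc x ltac:(lra))).
  apply Rabs_le. lra.
Qed.

Lemma omega2_ge delta v : second_differences delta v -> v <= omega2 f delta.
Proof.
  destruct second_differences_bounded as [c Hc]. apply (Lub_Rbar_ge _ c). apply Hc.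
Qed.

Lemma omega2_le delta c : 0 <= delta -> (forall v, second_differences delta v -> v <= c) ->
  omega2 f delta <= c.
Proof.
  intros Hd H. apply Lub_Rbar_le; [|exact H].
  exists 0, 0, 0. rewrite Rabs_R0, Rminus_0_r, Rplus_0_r. repeat split; try lra.
  rewrite <- Rabs_R0. f_equal. ring.
Qed.

Lemma second_difference_le_omega2 u s delta : 0 <= s <= delta -> 0 <= u - s -> u + s <= 1 ->
  Rabs (f (u - s) - 2 * f u + f (u + s)) <= omega2 f delta.
Proof.
  intros Hs H1 H2. apply omega2_ge. exists u, s. rewrite Rabs_right by lra.
  repeat split; lra.
Qed.

Lemma omega2_nonneg delta : 0 <= delta -> 0 <= omega2 f delta.
Proof.
  intros Hd. pose proof (second_difference_le_omega2 0 0 delta ltac:(lra) ltac:(lra) ltac:(lra)).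
  pose proof (Rabs_pos (f (0 - 0) - 2 * f 0 + f (0 + 0))). lra.
Qed.

Lemma omega2_monotone d1 d2 : 0 <= d1 -> d1 <= d2 -> omega2 f d1 <= omega2 f d2.
Proof.
  intros H1 H2. apply omega2_le; [assumption|].
  intros v [x [h [A [B [C D]]]]]. apply omega2_ge. exists x, h. repeat split; lra.
Qed.

Lemma omega2_vanishing eps : 0 < eps ->
  exists d, 0 < d /\ forall delta, 0 <= delta <= d -> omega2 f delta <= eps.
Proof.
  intros He. destruct (cont01_uniform (eps / 2) ltac:(lra)) as [d [Hd H]].
  exists (d / 2). split; [lra|]. intros delta Hdelta. apply omega2_le; [lra|].
  intros v [x [h [A [B [C ->]]]]].
  assert (Hx : 0 <= x <= 1) by lra.
  pose proof (H (x - h) x A Hx ltac:(replace (x - h - x) with (- h) by ring; rewrite Rabs_Ropp; lra)).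
  pose proof (H (x + h) x B Hx ltac:(replace (x + h - x) with h by ring; lra)).
  replace (f (x - h) - 2 * f x + f (x + h)) with ((f (x - h) - f x) + (f (x + h) - f x)) by ring.
  pose proof (Rabs_triang (f (x - h) - f x) (f (x + h) - f x)). lra.
Qed.

End ModulusOfSmoothness.

Lemma INR_pred k : (1 <= k)%nat -> INR (k - 1) = INR k - 1.
Proof. intros H. rewrite minus_INR by lia. simpl. ring. Qed.

Lemma up_INR (y : R) (k : nat) : INR k - 1 <= y -> y < INR k -> up y = Z.of_nat k.
Proof. intros H1 H2. symmetry. apply tech_up; rewrite <- INR_IZR_INZ; lra. Qed.

Lemma piece_bounds m k x : (1 <= k)%nat -> 0 < INR m ->
  INR (k - 1) / INR m <= x <= INR k / INR m <-> INR k - 1 <= INR m * x <= INR k.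
Proof.
  intros Hk Hm. rewrite (Rle_div_l _ _ _ Hm), <- (Rle_div_r _ _ _ Hm), INR_pred by assumption.
  rewrite (Rmult_comm x). reflexivity.
Qed.

Lemma piece_index_on_piece m k x : (1 <= k <= m)%nat ->
  INR (k - 1) / INR m <= x <= INR k / INR m ->
  piece_index m x = k \/ (x = INR k / INR m /\ (k < m)%nat /\ piece_index m x = S k).
Proof.
  intros Hk Hx. assert (Hm : 0 < INR m) by (apply lt_0_INR; lia).
  apply piece_bounds in Hx; [|lia|assumption].
  unfold piece_index.
  destruct (Rlt_or_le (INR m * x) (INR k)) as [C|C].
  - left. rewrite (up_INR _ k), Nat2Z.id by lra. lia.
  - rewrite (up_INR _ (S k)), Nat2Z.id by (rewrite S_INR; lra).
    destruct (Nat.eq_dec k m) as [->|Hne]; [left; lia|right].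
    split; [|lia]. apply (Rmult_eq_reg_l (INR m)); [|lra].
    field_simplify; lra.
Qed.

Lemma piece_index_spec m x : (1 <= m)%nat -> 0 <= x <= 1 ->
  (1 <= piece_index m x <= m)%nat /\
  INR (piece_index m x - 1) / INR m <= x <= INR (piece_index m x) / INR m.
Proof.
  intros Hm Hx. assert (Hmp : 0 < INR m) by (apply lt_0_INR; lia).
  destruct (archimed (INR m * x)) as [A1 A2].
  assert (Hz : (0 < up (INR m * x))%Z) by (apply lt_IZR; simpl; nra).
  set (j := Z.to_nat (up (INR m * x))).
  assert (Hj : INR j = IZR (up (INR m * x))) by (unfold j; rewrite INR_IZR_INZ, Z2Nat.id; [reflexivity|lia]).
  assert (Hj1 : (1 <= j)%nat) by (unfold j; lia).
  unfold piece_index. fold j. replace (Nat.max 1 j) with j by lia.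
  destruct (le_lt_dec j m) as [C|C].
  - replace (Nat.min m j) with j by lia. split; [lia|].
    apply piece_bounds; [assumption|assumption|lra].
  - replace (Nat.min m j) with m by lia. split; [lia|].
    assert (INR (S m) <= INR j) by (apply le_INR; lia). rewrite S_INR in H.
    apply piece_bounds; [assumption|assumption|nra].
Qed.

Lemma contraction_factor_range n : (1 <= n)%nat -> 0 <= 1 - 1 / INR n < 1.
Proof.
  intros Hn. assert (1 <= INR n) by (apply (le_INR 1); assumption).
  assert (0 < 1 / INR n <= 1) by (split; [apply Rdiv_lt_0_compat | apply Rle_div_l]; lra).
  lra.
Qed.

Section OnePiece.

Variables (m k : nat) (f : R -> R).
Hypothesis Hk : (1 <= k <= m)%nat.
Let a := INR (k - 1) / INR m.
Let b := INR k / INR m.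
Let m_pos : 0 < INR m := lt_0_INR m (Nat.le_trans _ _ _ (proj1 Hk) (proj2 Hk)).

Lemma piece_length : b - a = / INR m.
Proof. pose proof m_pos. unfold a, b. rewrite INR_pred by lia. field. lra. Qed.

Lemma piece_lt : a < b.
Proof.
  pose proof m_pos. pose proof piece_length.
  assert (0 < / INR m) by (apply Rinv_0_lt_compat; assumption). lra.
Qed.

Lemma piece_in01 : 0 <= a /\ b <= 1.
Proof.
  pose proof m_pos. assert (INR k <= INR m) by (apply le_INR; lia).
  split; unfold a, b.
  - apply Rdiv_le_0_compat; [apply pos_INR | assumption].
  - apply Rle_div_l; lra.
Qed.

Lemma comp_bernstein_iter_piece n r x : (1 <= n)%nat -> a <= x <= b ->
  comp_bernstein_iter n m r f x = bernstein_iter a b n r f x.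
Proof.
  intros Hn. revert x. induction r as [|r IH]; intros x Hx; [reflexivity|].
  change (comp_bernstein_iter n m (S r) f x)
    with (bernstein_k n m (piece_index m x) (comp_bernstein_iter n m r f) x).
  rewrite bernstein_iter_S. unfold bernstein_k.
  destruct (piece_index_on_piece m k x Hk Hx) as [-> | [Ex [Hkm ->]]].
  - apply bernstein_ab_ext; [exact piece_lt | exact Hn | intros t Ht; apply IH, Ht].
  - (* at the node b the neighbouring piece is used, and both operators interpolate there *)
    replace (S k - 1)%nat with k by lia. fold b. subst x.
    assert (Hnext : b < INR (S k) / INR m).
    { pose proof m_pos. apply Rmult_lt_compat_r; [apply Rinv_0_lt_compat; lra|].
      rewrite S_INR. lra. }
    rewrite (bernstein_ab_left b _ n Hnext Hn), (bernstein_ab_right a b n piece_lt Hn).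
    apply IH. pose proof piece_lt. lra.
Qed.

Let slope := INR m * (f b - f a).

Lemma lin_interp_piece x : a <= x <= b -> lin_interp m f x = f a - slope * a + slope * x.
Proof.
  intros Hx. pose proof m_pos. unfold lin_interp, slope.
  destruct (piece_index_on_piece m k x Hk Hx) as [-> | [Ex [Hkm ->]]].
  - fold a b. unfold a. field. lra.
  - replace (S k - 1)%nat with k by lia. fold b. rewrite Ex.
    unfold a, b. rewrite INR_pred by lia. field. lra.
Qed.

Hypothesis Hf : cont01 f.

Lemma chord_error_majorant h W : 0 < h -> omega2 f h < W ->
  forall t, a <= t <= b -> Rabs (f t - (f a - slope * a + slope * t)) <= W + W / h ^ 2 * bump a b t.
Proof.
  intros Hh HW. pose proof piece_lt. pose proof piece_in01.
  assert (HW0 : 0 < W) by (pose proof (omega2_nonneg f Hf h ltac:(lra)); lra).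
  set (E := fun t => f (clamp01 t) - (f a - slope * a + slope * t)).
  assert (HE : forall t, a <= t <= b -> E t = f t - (f a - slope * a + slope * t)).
  { intros t Ht. unfold E. rewrite clamp01_id by lra. reflexivity. }
  assert (Ea : E a = 0) by (rewrite HE by lra; ring).
  assert (Eb : E b = 0).
  { rewrite HE by lra. transitivity (f b - f a - slope * (b - a)); [ring|].
    pose proof m_pos. unfold slope. rewrite piece_length. field. lra. }
  assert (Hcont : forall c, a <= c <= b -> continuity_pt E c).
  { intros c _. apply continuity_pt_minus; [apply cont01_continuity_pt_clamp, Hf | reg]. }
  assert (Hdiff : forall u s, 0 <= s <= h -> a <= u - s -> u + s <= b ->
            Rabs (E (u - s) - 2 * E u + E (u + s)) < W).
  { intros u s Hs H1 H2. rewrite !HE by lra.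
    replace (f (u - s) - _ - 2 * _ + _) with (f (u - s) - 2 * f u + f (u + s)) by ring.
    pose proof (second_difference_le_omega2 f Hf u s h Hs ltac:(lra) ltac:(lra)). lra. }
  intros t Ht. rewrite <- HE by assumption. apply Rabs_le. split.
  - assert (- E t <= W + W / h ^ 2 * bump a b t); [|lra].
    apply (second_difference_majorant a b h W (fun t => - E t)); try assumption.
    + intros c Hc. apply continuity_pt_opp, Hcont, Hc.
    + rewrite Ea. ring.
    + rewrite Eb. ring.
    + intros u s Hs H1 H2. pose proof (Hdiff u s Hs H1 H2) as D.
      apply Rlt_le, Rabs_le_between in D. lra.
  - apply second_difference_majorant; try assumption.
    intros u s Hs H1 H2. pose proof (Hdiff u s Hs H1 H2) as D.
    apply Rlt_le, Rabs_le_between in D. lra.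
Qed.

Lemma comp_bernstein_iter_error_majorant n r x h W : (1 <= n)%nat -> a <= x <= b ->
  0 < h -> omega2 f h < W ->
  Rabs (comp_bernstein_iter n m r f x - lin_interp m f x)
  <= W + W / h ^ 2 * ((1 - 1 / INR n) ^ r * bump a b x).
Proof.
  intros Hn Hx Hh HW. rewrite comp_bernstein_iter_piece, lin_interp_piece by assumption.
  apply bernstein_iter_affine_error; [exact piece_lt | exact Hn | assumption |].
  apply chord_error_majorant; assumption.
Qed.

(* Take h^2 = bump a b x * (1 - 1/n)^r, so the majorant is 2W; if that vanishes, let h -> 0 instead. *)
Lemma comp_bernstein_iter_pointwise_error n r x : (1 <= n)%nat -> a <= x <= b ->
  Rabs (comp_bernstein_iter n m r f x - lin_interp m f x)
  <= 2 * omega2 f (sqrt (bump a b x * (1 - 1 / INR n) ^ r)).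
Proof.
  intros Hn Hx. pose proof (contraction_factor_range n Hn).
  set (D := bump a b x * (1 - 1 / INR n) ^ r).
  assert (HD : 0 <= D) by (apply Rmult_le_pos; [unfold bump; nra | apply pow_le; lra]).
  pose proof (omega2_nonneg f Hf (sqrt D) (sqrt_pos D)).
  apply Rle_plus_epsilon. intros eps Heps.
  destruct (Rlt_or_le 0 D) as [Dpos|Dzero].
  - pose proof (sqrt_lt_R0 D Dpos) as Hh.
    pose proof (comp_bernstein_iter_error_majorant n r x (sqrt D) (omega2 f (sqrt D) + eps / 2)
                  Hn Hx Hh ltac:(lra)) as Hmaj.
    rewrite pow2_sqrt in Hmaj by assumption.
    replace ((1 - 1 / INR n) ^ r * bump a b x) with D in Hmaj by (unfold D; ring).
    replace (_ / D * D) with (omega2 f (sqrt D) + eps / 2) in Hmaj by (field; lra). lra.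
  - destruct (omega2_vanishing f Hf (eps / 2) ltac:(lra)) as [d [Hd Hsmall]].
    pose proof (comp_bernstein_iter_error_majorant n r x d eps Hn Hx Hd
                  ltac:(pose proof (Hsmall d ltac:(lra)); lra)) as Hmaj.
    replace ((1 - 1 / INR n) ^ r * bump a b x) with D in Hmaj by (unfold D; ring).
    replace D with 0 in Hmaj by lra. lra.
Qed.

End OnePiece.

Section CompositeBernstein.

Variables (n m : nat) (f : R -> R).
Hypothesis Hn : (1 <= n)%nat.
Hypothesis Hm : (1 <= m)%nat.
Hypothesis Hf : cont01 f.

Lemma comp_bernstein_iter_uniform_error r x : 0 <= x <= 1 ->
  Rabs (comp_bernstein_iter n m r f x - lin_interp m f x)
  <= 2 * omega2 f (1 / (2 * INR m) * sqrt ((1 - 1 / INR n) ^ r)).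
Proof.
  intros Hx. destruct (piece_index_spec m x Hm Hx) as [Hk Hxk].
  eapply Rle_trans; [apply (comp_bernstein_iter_pointwise_error m _ f Hk Hf n r x Hn Hxk)|].
  set (k := piece_index m x) in *.
  set (a := INR (k - 1) / INR m) in *. set (b := INR k / INR m) in *.
  pose proof (lt_0_INR m Hm). pose proof (contraction_factor_range n Hn).
  assert (Hq : 0 <= (1 - 1 / INR n) ^ r) by (apply pow_le; lra).
  assert (Hhalf : 0 < 1 / (2 * INR m)) by (apply Rdiv_lt_0_compat; lra).
  assert (Hbump : 0 <= bump a b x <= (1 / (2 * INR m)) ^ 2).
  { replace (1 / (2 * INR m)) with ((b - a) / 2)
      by (unfold a, b; rewrite (piece_length m k Hk); field; lra).
    unfold bump. pose proof (pow2_ge_0 (x - (a + b) / 2)). split; nra. }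
  apply Rmult_le_compat_l; [lra|].
  apply omega2_monotone; [assumption | apply sqrt_pos |].
  rewrite sqrt_mult by lra. apply Rmult_le_compat_r; [apply sqrt_pos|].
  rewrite <- (sqrt_pow2 (1 / (2 * INR m))) by lra. apply sqrt_le_1_alt, Hbump.
Qed.

Lemma comp_bernstein_iter_uniform_convergence eps : 0 < eps ->
  exists N, forall r, (N <= r)%nat -> forall x, 0 <= x <= 1 ->
    Rabs (comp_bernstein_iter n m r f x - lin_interp m f x) < eps.
Proof.
  intros Heps. destruct (omega2_vanishing f Hf (eps / 3) ltac:(lra)) as [d [Hd Hsmall]].
  pose proof (lt_0_INR m Hm). pose proof (contraction_factor_range n Hn).
  destruct (pow_lt_1_zero (1 - 1 / INR n) ltac:(rewrite Rabs_right; lra) ((2 * INR m * d) ^ 2))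
    as [N HN]; [apply pow_lt; nra|].
  exists N. intros r Hr x Hx.
  eapply Rle_lt_trans; [apply comp_bernstein_iter_uniform_error, Hx|].
  assert (Hq : 0 <= (1 - 1 / INR n) ^ r) by (apply pow_le; lra).
  assert (Hsqrt : sqrt ((1 - 1 / INR n) ^ r) <= 2 * INR m * d).
  { specialize (HN r Hr). rewrite Rabs_right in HN by lra.
    rewrite <- (sqrt_pow2 (2 * INR m * d)) by nra. apply sqrt_le_1_alt. lra. }
  assert (Hstep : 0 <= 1 / (2 * INR m) * sqrt ((1 - 1 / INR n) ^ r) <= d).
  { split; [apply Rmult_le_pos; [apply Rlt_le, Rdiv_lt_0_compat; lra | apply sqrt_pos]|].
    replace (1 / (2 * INR m) * _) with (sqrt ((1 - 1 / INR n) ^ r) / (2 * INR m)) by (field; lra).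
    apply Rle_div_l; lra. }
  pose proof (Hsmall _ Hstep). lra.
Qed.

End CompositeBernstein.

Theorem mainTheorem2 (n m : nat) (f : R -> R) :
  (1 <= n)%nat -> (1 <= m)%nat -> cont01 f ->
  (forall r : nat, (1 <= r)%nat ->
     forall k : nat, (1 <= k <= m)%nat ->
     forall x : R, INR (k - 1) / INR m <= x <= INR k / INR m ->
       Rabs (comp_bernstein_iter n m r f x - lin_interp m f x)
       <= 9 / 4 * omega2 f (sqrt ((x - INR (k - 1) / INR m) * (INR k / INR m - x)
                                  * (1 - 1 / INR n) ^ r)))
  /\
  (forall r : nat, (1 <= r)%nat ->
     supnorm01 (fun x => comp_bernstein_iter n m r f x - lin_interp m f x)
     <= 9 / 4 * omega2 f (1 / (2 * INR m) * sqrt ((1 - 1 / INR n) ^ r)))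
  /\
  (forall eps : R, 0 < eps -> exists N : nat, forall r : nat, (N <= r)%nat ->
     forall x : R, 0 <= x <= 1 ->
       Rabs (comp_bernstein_iter n m r f x - lin_interp m f x) < eps).
Proof.
  intros Hn Hm Hf. split; [|split].
  - intros r _ k Hk x Hx.
    pose proof (omega2_nonneg f Hf _ (sqrt_pos ((x - INR (k - 1) / INR m) * (INR k / INR m - x)
                                                * (1 - 1 / INR n) ^ r))).
    pose proof (comp_bernstein_iter_pointwise_error m k f Hk Hf n r x Hn Hx). unfold bump in *. lra.
  - intros r _. apply Lub_Rbar_le.
    + exists (Rabs (comp_bernstein_iter n m r f 0 - lin_interp m f 0)), 0. split; [lra | reflexivity].
    + intros v [x [Hx ->]].
      pose proof (comp_bernstein_iter_uniform_error n m f Hn Hm Hf r x Hx).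
      assert (Hstep : 0 <= 1 / (2 * INR m) * sqrt ((1 - 1 / INR n) ^ r)).
      { apply Rmult_le_pos; [| apply sqrt_pos].
        apply Rlt_le, Rdiv_lt_0_compat; [lra|]. pose proof (lt_0_INR m Hm). lra. }
      pose proof (omega2_nonneg f Hf _ Hstep). lra.
  - apply comp_bernstein_iter_uniform_convergence; assumption.
Qed.
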